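(* Let $f:\{0,1\}^n\to\{0,1\}$ be a Boolean function and $c\in\mathbb{R}^n_{\ge0}$ a cost vector. For every $\varepsilon\in(0,0.5]$ and $\beta>0$, there exists an $\varepsilon$-error online algorithm with unit investment $\beta$ (namely the algorithm Warmup-IPRR$(f,\varepsilon)$ described in the context) whose expected cost satisfies \[ \mathrm{avg\text{-}cost}_c \le \beta n + \frac{\mathrm{opt}^{\mathrm{w}}_0(f,c)}{\varepsilon}\sum_{i=1}^n \mathrm{Inf}_i[f]\left(1+\ln\frac{1}{\mathrm{Inf}_i[f]}\right). \]
   Context: Online priced query model: $f:\{0,1\}^n\to\{0,1\}$ is given; the input $x\in\{0,1\}^n$ and costs $c\in\mathbb{R}^n_{\ge0}$ are unknown. The algorithm maintains investments $\theta\in\mathbb{R}^n_{\ge0}$, initially $0$; each step it increases one $\theta_i$ by $\beta$; $x_i$ is revealed once $\theta_i\ge c_i$. The cost on input $x$ is $\|\theta\|_1$ at halting. Offline algorithms know $c$ and pay $c_i$ to reveal $x_i$. An algorithm is $\varepsilon$-error if $\Pr_{x}[\text{output}\ne f(x)]\le\varepsilon$ for uniform $x$. $\mathrm{avg\text{-}cost}_c$ is the expected cost over uniform $x$; $\mathrm{worst\text{-}cost}_c$ is the max over $x$. $\mathrm{opt}^{\mathrm{w}}_0(f,c)$ is the infimum of worst-case cost over all zero-error algorithms (offline or online). $\mathrm{Inf}_i[f]=\Pr_x[f(x)\ne f(x^{\oplus i})]$ ($x^{\oplus i}$: $x$ with bit $i$ flipped); terms with $\mathrm{Inf}_i[f]=0$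 contribute $0$. For a restriction $\pi$ (partial assignment of variables), $f_\pi$ is the restricted function, and $\mathrm{bias}(g)=\min\{\Pr_x[g(x)\ne0],\Pr_x[g(x)\ne1]\}$. Warmup-IPRR$(f,\varepsilon)$: start with $\theta=0$, $\pi=\emptyset$; while $\mathrm{bias}(f_\pi)>\varepsilon$: pick $i^*\in\arg\max_i \mathrm{Inf}_i[f_\pi]/\theta_i$, increase $\theta_{i^*}$ by $\beta$, and if $x_{i^*}$ is revealed as $b$, add $x_{i^*}\mapsto b$ to $\pi$; finally output $\mathbf{1}\{\mathbb{E}_x[f_\pi(x)]\ge 1/2\}$. *)

From HB Require Import structures.
From mathcomp Require Import all_boot all_order all_algebra.
From mathcomp Require Import all_classical all_reals.
From mathcomp Require Import ereal exp.

Set Implicit Arguments.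
Unset Strict Implicit.
Unset Printing Implicit Defensive.

Import Order.TTheory GRing.Theory Num.Theory.
Local Open Scope ring_scope.

(** The Boolean cube {0,1}^n (false = 0, true = 1). *)
Definition cube (n : nat) := {ffun 'I_n -> bool}.

Definition avg {R : realType} {n : nat} (g : cube n -> R) : R :=
  (\sum_(x : cube n) g x) / (#|{: cube n}|)%:R.

Definition prob {R : realType} {n : nat} (P : pred (cube n)) : R :=
  avg (fun x => (P x)%:R).

Definition flip {n : nat} (x : cube n) (i : 'I_n) : cube n :=
  [ffun j => if j == i then ~~ x j else x j].

Definition Inf {R : realType} {n : nat} (g : cube n -> bool) (i : 'I_n) : R :=
  prob (fun x => g x != g (flip x i)).

Definition restriction (n : nat) := 'I_n -> option bool.
Definition empty_restr (n : nat) : restriction n := fun _ => None.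

Definition restr_apply {n : nat} (pi : restriction n) (x : cube n) : cube n :=
  [ffun j => if pi j is Some b then b else x j].

Definition frestr {n : nat} (f : cube n -> bool) (pi : restriction n) :
  cube n -> bool := fun x => f (restr_apply pi x).

Definition bias {R : realType} {n : nat} (g : cube n -> bool) : R :=
  Num.min (prob (fun x => g x != false)) (prob (fun x => g x != true)).

Definition expect_bool {R : realType} {n : nat} (g : cube n -> bool) : R :=
  avg (fun x => (g x)%:R).

Definition state (R : realType) (n : nat) : Type :=
  (('I_n -> R) * restriction n)%type.

Definition init_state (R : realType) (n : nat) : state R n :=
  ((fun _ => 0), @empty_restr n).

(** The ratio Inf_i[f_pi] / theta_i, as an extended real: when theta_i = 0
    it is +oo if the influence is positive and 0 if the influence is 0. *)
Definition iprr_ratio {R : realType} {n : nat} (f : cube n -> bool)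
    (s : state R n) (i : 'I_n) : \bar R :=
  let I := Inf (frestr f s.2) i in
  if s.1 i == 0 then (if I == 0 then 0%E else +oo%E) else (I / s.1 i)%:E.

(** A tie-breaking rule for Warmup-IPRR: whenever the loop condition
    bias(f_pi) > eps holds, it selects some i* in argmax_i Inf_i[f_pi]/theta_i. *)
Definition iprr_selector {R : realType} {n : nat} (f : cube n -> bool) (eps : R)
    (sel : state R n -> option 'I_n) : Prop :=
  forall s : state R n, eps < bias (frestr f s.2) ->
    exists2 i, sel s = Some i & forall j, (iprr_ratio f s j <= iprr_ratio f s i)%E.

Definition invest {R : realType} {n : nat} (c : 'I_n -> R) (beta : R)
    (x : cube n) (s : state R n) (i : 'I_n) : state R n :=
  let theta' := fun j => if j == i then s.1 j + beta else s.1 j in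
  let pi' := if c i <= theta' i then
               (fun j => if j == i then Some (x i) else s.2 j)
             else s.2 in
  (theta', pi').

Definition iprr_step {R : realType} {n : nat} (f : cube n -> bool) (c : 'I_n -> R)
    (eps beta : R) (sel : state R n -> option 'I_n) (x : cube n)
    (s : state R n) : state R n :=
  if eps < bias (frestr f s.2) then
    (if sel s is Some i then invest c beta x s i else s)
  else s.

Definition iprr_run {R : realType} {n : nat} (f : cube n -> bool) (c : 'I_n -> R)
    (eps beta : R) (sel : state R n -> option 'I_n) (x : cube n) (k : nat) :
    state R n :=
  iter k (iprr_step f c eps beta sel x) (init_state R n).

Definition iprr_halted {R : realType} {n : nat} (f : cube n -> bool) (eps : R)
    (s : state R n) : Prop :=
  bias (frestr f s.2) <= eps.

Definition iprr_output {R : realType} {n : nat} (f : cube n -> bool)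
    (s : state R n) : bool :=
  ((2 : R)^-1 <= expect_bool (frestr f s.2)).

Definition l1cost {R : realType} {n : nat} (s : state R n) : R :=
  \sum_(i < n) `|s.1 i|.

(** ** Offline algorithms: adaptive decision trees paying c_i per query *)
Inductive dtree (n : nat) : Type :=
  | DLeaf of bool
  | DNode of 'I_n & dtree n & dtree n.  (* query x_i; left if 0, right if 1 *)

Fixpoint dt_eval {n : nat} (t : dtree n) (x : cube n) : bool :=
  match t with
  | DLeaf b => b
  | DNode i t0 t1 => if x i then dt_eval t1 x else dt_eval t0 x
  end.

Fixpoint dt_cost {R : realType} {n : nat} (c : 'I_n -> R) (t : dtree n)
    (x : cube n) : R :=
  match t with
  | DLeaf _ => 0
  | DNode i t0 t1 => c i + (if x i then dt_cost c t1 x else dt_cost c t0 x)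
  end.

Definition dt_zero_error {n : nat} (f : cube n -> bool) (t : dtree n) : Prop :=
  forall x, dt_eval t x = f x.

Definition dt_worst_cost {R : realType} {n : nat} (c : 'I_n -> R) (t : dtree n) : R :=
  \big[Num.max/0]_(x : cube n) dt_cost c t x.

Definition opt0w {R : realType} {n : nat} (f : cube n -> bool) (c : 'I_n -> R) : R :=
  inf [set w : R | exists t : dtree n, dt_zero_error f t /\ w = dt_worst_cost c t].

Definition inf_term {R : realType} (I : R) : R :=
  if I == 0 then 0 else I * (1 + ln (I^-1)).

From HB Require Import structures.
From mathcomp Require Import all_boot all_order all_algebra.
From mathcomp Require Import all_classical all_reals.
From mathcomp Require Import ereal exp.
From mathcomp Require Import lra ring.
Import Order.TTheory GRing.Theory Num.Theory.
Local Open Scope ring_scope.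
Set Implicit Arguments. Unset Strict Implicit. Unset Printing Implicit Defensive.

(* Two estimates drive the proof.

   Selection: if T is a zero-error decision tree for f, then T restricted by
   the current assignment pi computes f_pi, and the OSSS-type inequality
   bias(g) <= E_x[sum of Inf_j[g] over the queries j of a tree for g along x]
   gives eps < E_x[sum_(queries j) Inf_j[f_pi]].  Since the selected i
   maximises Inf_j[f_pi] / theta_j and theta_j <= c_j for unrevealed j, each
   term is at most c_j Inf_i[f_pi] / theta_i, whence
   eps * theta_i <= opt * Inf_i[f_pi] whenever coordinate i is invested in.

   Martingale: revealing coordinates of a uniform input leaves the unrevealed
   ones uniform, so M = Inf_i[f_pi] averages to at most Inf_i[f] at any
   stopping time, and by Markov's inequality M reaches level lam with
   probability at most Inf_i[f] / lam.  As theta_i exceeds k beta only after M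
   reached eps k beta / opt, summing over k gives
   E[theta_i] <= beta + opt/eps * int_0^1 min(1, Inf_i[f]/lam) dlam, which is
   the term Inf_i[f] (1 + ln (1 / Inf_i[f])).

   Finally, on halting the output is the majority value of f_pi, which errs on
   a bias(f_pi) <= eps fraction of the completions of pi, and completions of
   the revealed part of a uniform input are uniform. *)

Section Average.
Variables (R : realType) (n : nat).
Local Notation cube := (cube n).

Definition ncube : R := (#|{: cube}|)%:R.

Lemma ncube_gt0 : 0 < ncube.
Proof. by rewrite /ncube ltr0n; apply/card_gt0P; exists [ffun=> false]. Qed.

Lemma sumr_cube_cst (a : R) : \sum_(x : cube) a = ncube * a.
Proof. by rewrite sumr_const /ncube mulr_natl. Qed.

Lemma avg_cst (a : R) : avg (fun _ : cube => a) = a.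
Proof. by rewrite /avg sumr_cube_cst -/ncube mulrC mulKf ?gt_eqF ?ncube_gt0. Qed.

Lemma avg_ler (h1 h2 : cube -> R) : (forall x, h1 x <= h2 x) -> avg h1 <= avg h2.
Proof. by move=> H; rewrite /avg ler_pM2r ?invr_gt0 ?ncube_gt0 //; apply: ler_sum. Qed.

Lemma avg_ub (h : cube -> R) M : (forall x, h x <= M) -> avg h <= M.
Proof. by move=> H; rewrite -[M]avg_cst; apply: avg_ler. Qed.

Lemma avg_ge0 (h : cube -> R) : (forall x, 0 <= h x) -> 0 <= avg h.
Proof. by move=> H; rewrite -(avg_cst 0); apply: avg_ler. Qed.

Lemma avgMr (h : cube -> R) a : avg h * a = avg (fun x => h x * a).
Proof. by rewrite /avg mulrAC mulr_suml. Qed.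

Lemma avgMl (h : cube -> R) a : a * avg h = avg (fun x => a * h x).
Proof. by rewrite mulrC avgMr; congr avg; apply: funext => x; rewrite mulrC. Qed.

Lemma avgD (h1 h2 : cube -> R) : avg (fun x => h1 x + h2 x) = avg h1 + avg h2.
Proof. by rewrite /avg big_split mulrDl. Qed.

Lemma avg_sum (I : finType) (h : I -> cube -> R) :
  avg (fun x => \sum_i h i x) = \sum_i avg (h i).
Proof. by rewrite /avg exchange_big mulr_suml. Qed.

Lemma Inf_ge0 (g : cube -> bool) j : 0 <= Inf g j :> R.
Proof. by apply: avg_ge0 => x; rewrite ler0n. Qed.

Lemma Inf_le1 (g : cube -> bool) j : Inf g j <= 1 :> R.
Proof. by apply: avg_ub => x; rewrite lern1 leq_b1. Qed.

End Average.

Section Resampling.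
Variables (R : realType) (n : nat).
Local Notation cube := (cube n).

Definition mix (D : {set 'I_n}) (x y : cube) : cube :=
  [ffun j => if j \in D then x j else y j].

Lemma mixE D x y j : mix D x y j = if j \in D then x j else y j.
Proof. by rewrite ffunE. Qed.

Lemma mix_mixl D x y z : mix D (mix D x y) z = mix D x z.
Proof. by apply/ffunP=> j; rewrite !mixE; case: (j \in D). Qed.

Lemma mix_mixr D x y z : mix D x (mix D y z) = mix D x z.
Proof. by apply/ffunP=> j; rewrite !mixE; case: (j \in D). Qed.

Lemma mixxx D x : mix D x x = x.
Proof. by apply/ffunP=> j; rewrite !mixE; case: (j \in D). Qed.

Lemma mix0 (x y : cube) : mix finset.set0 x y = y.
Proof. by apply/ffunP=> j; rewrite mixE finset.in_set0. Qed.

Lemma mix_mixr_subset (D E : {set 'I_n}) y x w :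
  D \subset E -> mix E y (mix D x w) = mix E y w.
Proof.
move=> sDE; apply/ffunP=> j; rewrite !mixE; case: ifP => // jE.
by rewrite (negbTE (contraFN (fintype.subsetP sDE j) jE)).
Qed.

Lemma mix_setU1 (j : 'I_n) D (y w : cube) :
  mix (j |: D) y w =
  if (j \in D) || (y j == w j) then mix D y w else flip (mix D y w) j.
Proof.
apply/ffunP => k; case: (eqVneq k j) => [->|nkj];
  case: ifP; rewrite /flip ?ffunE ?mixE ?in_setU1 ?eqxx ?(negbTE nkj) //=;
  by case: (j \in D); case: (y j); case: (w j).
Qed.

Definition agree (D : {set 'I_n}) (x x' : cube) := forall j, j \in D -> x' j = x j.

Lemma agree_mix D x y : agree D x (mix D x y).
Proof. by move=> j jD; rewrite mixE jD. Qed.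

Lemma agree_subset (D E : {set 'I_n}) x x' :
  D \subset E -> agree E x x' -> agree D x x'.
Proof. by move=> sDE H j /(fintype.subsetP sDE); apply: H. Qed.

Definition stopping (Dm : cube -> {set 'I_n}) :=
  forall x x', agree (Dm x) x x' -> Dm x' = Dm x.

(* Reindex by the involution (x, y) |-> (mix D x y, mix D y x), D = Dm x; it
   is one because a stopping set D is unchanged by the new first component. *)
Lemma sum_mix_stopping (Dm : cube -> {set 'I_n}) (K : cube -> cube -> R) :
  stopping Dm -> (forall x x' z, agree (Dm x) x x' -> K x' z = K x z) ->
  \sum_x \sum_y K x (mix (Dm x) x y) = ncube R n * \sum_x K x x.
Proof.
move=> stD HK; rewrite pair_big /=.
pose sg p := (mix (Dm p.1) p.1 p.2, mix (Dm p.1) p.2 p.1).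
have Dm_sg x y : Dm (mix (Dm x) x y) = Dm x by apply: stD; apply: agree_mix.
have sgK : cancel sg sg.
  by case=> x y; rewrite /sg /= Dm_sg !mix_mixl !mix_mixr !mixxx.
rewrite (reindex_inj (can_inj sgK)) /=.
under eq_bigr => p _.
  rewrite /sg /= Dm_sg mix_mixl mix_mixr mixxx (HK _ _ _ (@agree_mix _ _ _)).
over.
rewrite -(pair_big xpredT xpredT (fun x (_ : cube) => K x x)) /= mulr_sumr.
by apply: eq_bigr => x _; rewrite sumr_cube_cst.
Qed.

Lemma sum_mix (D : {set 'I_n}) (G : cube -> R) :
  \sum_x \sum_y G (mix D x y) = ncube R n * \sum_x G x.
Proof. exact: (sum_mix_stopping (Dm := fun _ => D) (K := fun _ z => G z)). Qed.

End Resampling.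

Section AdaptiveProcess.
Variables (n : nat) (S : Type).
Variables (dom : S -> {set 'I_n}) (step : cube n -> S -> S) (s0 : S).
Hypothesis dom_step : forall x s, dom s \subset dom (step x s).
Hypothesis step_agree :
  forall x x' s, agree (dom (step x s)) x x' -> step x' s = step x s.

Definition process_run t x := iter t (step x) s0.

Lemma process_dom_mono t u x :
  (t <= u)%N -> dom (process_run t x) \subset dom (process_run u x).
Proof.
move=> /subnK <-; elim: (u - t)%N => [|k IH]; first by rewrite add0n.
by rewrite addSn /process_run iterS; apply: (fintype.subset_trans IH).
Qed.

Lemma process_run_agree t x x' :
  agree (dom (process_run t x)) x x' -> process_run t x' = process_run t x.
Proof.
elim: t => [//|t IH] H; rewrite /process_run !iterS -!/(process_run t _).
rewrite IH; first exact: step_agree.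
exact: agree_subset (process_dom_mono x (leqnSn t)) H.
Qed.

Lemma process_dom_stopping t : stopping (fun x => dom (process_run t x)).
Proof. by move=> x x' H; rewrite (process_run_agree H). Qed.

End AdaptiveProcess.

Section DecisionTreeWalk.
Variables (R : realType) (n : nat).
Local Notation cube := (cube n).
Local Notation walk_state := (dtree n * {set 'I_n})%type.

Definition walk_step (x : cube) (s : walk_state) : walk_state :=
  match s.1 with
  | DLeaf _ => s
  | DNode i t0 t1 => (if x i then t1 else t0, i |: s.2)
  end.

Fixpoint depth (t : dtree n) : nat :=
  match t with
  | DLeaf _ => 0%N
  | DNode _ t0 t1 => (maxn (depth t0) (depth t1)).+1
  end.

Definition next_query (s : walk_state) : option 'I_n :=
  if s.1 is DNode i _ _ then Some i else None.

Definition next_dom (s : walk_state) : {set 'I_n} :=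
  if s.1 is DNode i _ _ then i |: s.2 else s.2.

Definition query_cost (c : 'I_n -> R) (s : walk_state) : R :=
  if s.1 is DNode i _ _ then c i else 0.

Lemma walk_step_dom x (s : walk_state) : (walk_step x s).2 = next_dom s.
Proof. by case: s => [[b|i t0 t1] D]. Qed.

Lemma subset_next_dom (s : walk_state) : s.2 \subset next_dom s.
Proof. by case: s => [[b|i t0 t1] D] /=; [exact: subxx | exact: finset.subsetUr]. Qed.

Lemma subset_walk_step x (s : walk_state) : s.2 \subset (walk_step x s).2.
Proof. by rewrite walk_step_dom; apply: subset_next_dom. Qed.

Lemma walk_step_agree x x' (s : walk_state) :
  agree (walk_step x s).2 x x' -> walk_step x' s = walk_step x s.
Proof.
by case: s => [[b|i t0 t1] D] H; rewrite /walk_step /= in H *; rewrite ?(H i) ?setU11.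
Qed.

Lemma iter_walk_leaf x k b D : iter k (walk_step x) (DLeaf n b, D) = (DLeaf n b, D).
Proof. by elim: k => // k IH; rewrite iterS IH. Qed.

Lemma walk_leaf t D x s : (depth t <= s)%N ->
  (iter s (walk_step x) (t, D)).1 = DLeaf n (dt_eval t x).
Proof.
elim: t s D => [b|i t0 IH0 t1 IH1] s D /= Hs; first by rewrite iter_walk_leaf.
case: s Hs => // s; rewrite ltnS geq_max => /andP[H0 H1].
by rewrite iterSr /walk_step /=; case: (x i); [apply: IH1 | apply: IH0].
Qed.

Lemma walk_cost c t D x s : (depth t <= s)%N ->
  \sum_(k < s) query_cost c (iter k (walk_step x) (t, D)) = dt_cost c t x.
Proof.
elim: t s D => [b|i t0 IH0 t1 IH1] s D /= Hs.
  by apply: big1 => k _; rewrite iter_walk_leaf.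
case: s Hs => // s; rewrite ltnS geq_max => /andP[H0 H1].
rewrite big_ord_recl /=; congr (_ + _).
under eq_bigr => k _ do rewrite add0n -iterS iterSr.
by rewrite /walk_step /=; case: (x i); [apply: IH1 | apply: IH0].
Qed.

End DecisionTreeWalk.

Section OSSS.
Variables (R : realType) (n : nat) (F : cube n -> bool).
Local Notation cube := (cube n).
Local Notation ncube := (ncube R n).

Definition query_Inf (o : option 'I_n) : R := if o is Some j then Inf F j else 0.

Lemma natr_neq_telescope (a : nat -> cube) s :
  ((F (a 0%N) != F (a s))%:R : R) <= \sum_(t < s) ((F (a t) != F (a t.+1))%:R : R).
Proof.
elim: s => [|s IH]; first by rewrite big_ord0 eqxx.
rewrite big_ord_recr /=.
apply: (@le_trans _ _ ((F (a 0%N) != F (a s))%:R + (F (a s) != F (a s.+1))%:R)).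
  by case: (F (a 0%N)); case: (F (a s)); case: (F (a s.+1)) => /=; lra.
by rewrite lerD2r.
Qed.

Lemma bias_le_prob_neq b : bias F <= prob (fun u => F u != b) :> R.
Proof. by rewrite /bias; case: b; rewrite ge_min lexx ?orbT. Qed.

(* Revealing the queried coordinate j changes F on a resampled input only when
   flipping j does, which happens with probability Inf_j[F]. *)
Lemma sum_resample_query_le (s : dtree n * {set 'I_n}) :
  \sum_w \sum_y ((F (mix s.2 y w) != F (mix (next_dom s) y w))%:R : R)
  <= ncube * (ncube * query_Inf (next_query s)).
Proof.
case: s => [[b|j t0 t1] D] /=.
  by rewrite !mulr0 big1 // => w _; rewrite big1 // => y _; rewrite eqxx.
pose G (v : cube) := ((F v != F (flip v j))%:R : R).
apply: (@le_trans _ _ (\sum_w \sum_y G (mix D y w))).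
  apply: ler_sum => w _; apply: ler_sum => y _.
  by rewrite mix_setU1; case: ifP => _; rewrite ?eqxx ?ler0n.
rewrite exchange_big /= sum_mix /Inf /prob /avg -/ncube.
by rewrite (mulrC ncube (_ / _)) divfK ?gt_eqF ?ncube_gt0.
Qed.

Variable T : dtree n.
Hypothesis T_computes_F : forall x, dt_eval T x = F x.

Let walk t x := process_run (@walk_step n) (T, finset.set0) t x.
Let D t x := (walk t x).2.

Lemma walk_agree t x x' : agree (D t x) x x' -> walk t x' = walk t x.
Proof. exact: (process_run_agree (dom := snd) (@subset_walk_step n) (@walk_step_agree n)). Qed.

Lemma walk_dom_stopping t : stopping (D t).
Proof. by move=> x x' H; rewrite /D (walk_agree H). Qed.

Lemma walk_domS t x : D t.+1 x = next_dom (walk t x).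
Proof. by rewrite /D /walk /process_run iterS walk_step_dom. Qed.

Lemma agree_walk_dom_depth x z : agree (D (depth T) x) x z -> F z = F x.
Proof.
move=> /walk_agree; rewrite /walk /process_run -!T_computes_F => E.
have := walk_leaf finset.set0 z (leqnn (depth T)).
by rewrite E walk_leaf // => -[].
Qed.

Lemma sum_resample_telescope s :
  \sum_x \sum_y ((F x != F (mix (D s x) y x))%:R : R) <=
  \sum_(t < s) \sum_x \sum_y ((F (mix (D t x) y x) != F (mix (D t.+1 x) y x))%:R : R).
Proof.
rewrite [X in _ <= X]exchange_big /=; apply: ler_sum => x _.
rewrite [X in _ <= X]exchange_big /=; apply: ler_sum => y _.
have := natr_neq_telescope (fun t => mix (D t x) y x) s.
by rewrite /= {1}/D /walk /process_run /= mix0.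
Qed.

Lemma sum_resample_walk_step_le t :
  \sum_x \sum_y ((F (mix (D t x) y x) != F (mix (D t.+1 x) y x))%:R : R) <=
  ncube * \sum_x query_Inf (next_query (walk t x)).
Proof.
pose K x z := \sum_y ((F (mix (D t x) y z) != F (mix (D t.+1 x) y z))%:R : R).
have HK x x' z : agree (D t x) x x' -> K x' z = K x z.
  by move=> H; rewrite /K !walk_domS /D (walk_agree H).
rewrite -(ler_pM2l (ncube_gt0 R n)) -(sum_mix_stopping (@walk_dom_stopping t) HK) /K.
rewrite !mulr_sumr; apply: ler_sum => x _.
have sub : D t x \subset D t.+1 x by rewrite walk_domS; apply: subset_next_dom.
under eq_bigr => w _ do under eq_bigr => y _ do rewrite mix_mixr (mix_mixr_subset _ _ _ sub).
by rewrite walk_domS; apply: sum_resample_query_le.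
Qed.

Lemma bias_le_sum_resample :
  ncube * (ncube * bias F) <=
  \sum_x \sum_y ((F x != F (mix (D (depth T) x) y x))%:R : R).
Proof.
set s := depth T.
pose K x z := \sum_y ((F z != F (mix (D s x) y z))%:R : R).
have HK x x' z : agree (D s x) x x' -> K x' z = K x z.
  by move=> H; rewrite /K (walk_dom_stopping H).
rewrite -(ler_pM2l (ncube_gt0 R n)) -(sum_mix_stopping (@walk_dom_stopping s) HK) /K.
rewrite -[X in X <= _]sumr_cube_cst; apply: ler_sum => x _.
have Fx w : F (mix (D s x) x w) = F x.
  by apply: agree_walk_dom_depth; apply: agree_mix.
under eq_bigr => w _ do under eq_bigr => y _ do rewrite mix_mixr Fx.
rewrite exchange_big /= (sum_mix _ (fun v => ((F x != F v)%:R : R))) ler_pM2l ?ncube_gt0 //.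
have := bias_le_prob_neq (F x).
rewrite /prob /avg -/ncube ler_pdivlMr ?ncube_gt0 // mulrC.
by under eq_bigr => u _ do rewrite eq_sym.
Qed.

(* The O'Donnell-Saks-Schramm-Servedio inequality, with bias for variance. *)
Theorem bias_le_avg_query_Inf :
  bias F <= avg (fun x => \sum_(t < depth T) query_Inf (next_query (walk t x))).
Proof.
have N0 := ncube_gt0 R n.
have H : ncube * (ncube * bias F) <=
    ncube * \sum_x \sum_(t < depth T) query_Inf (next_query (walk t x)).
  apply: le_trans bias_le_sum_resample _.
  apply: le_trans (sum_resample_telescope _) _.
  rewrite [X in _ <= _ * X]exchange_big /= mulr_sumr.
  by apply: ler_sum => t _; apply: sum_resample_walk_step_le.
by rewrite ler_pM2l // in H; rewrite /avg -/ncube ler_pdivlMr // mulrC.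
Qed.

End OSSS.

Section TreeRestriction.
Variables (R : realType) (n : nat).
Local Notation cube := (cube n).

Lemma restr_apply_flip_assigned (pi : restriction n) j b x :
  pi j = Some b -> restr_apply pi (flip x j) = restr_apply pi x.
Proof.
move=> hj; apply/ffunP => k; rewrite !ffunE.
case: (eqVneq k j) => [->|nkj]; first by rewrite hj.
by case: (pi k) => //; rewrite ffunE (negbTE nkj).
Qed.

Lemma restr_apply_flip_free (pi : restriction n) j x :
  pi j = None -> restr_apply pi (flip x j) = flip (restr_apply pi x) j.
Proof.
move=> hj; apply/ffunP => k; rewrite !ffunE.
by case: (eqVneq k j) => [->|nkj]; rewrite ?hj //; case: (pi k).
Qed.

Lemma Inf_frestr_assigned (f : cube -> bool) (pi : restriction n) j b :
  pi j = Some b -> Inf (frestr f pi) j = 0 :> R.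
Proof.
move=> hj; rewrite /Inf /prob /avg big1 ?mul0r // => x _.
by rewrite /frestr (restr_apply_flip_assigned x hj) eqxx.
Qed.

Fixpoint tree_restr (pi : restriction n) (t : dtree n) : dtree n :=
  match t with
  | DLeaf b => DLeaf n b
  | DNode i t0 t1 =>
      match pi i with
      | Some b => if b then tree_restr pi t1 else tree_restr pi t0
      | None => DNode i (tree_restr pi t0) (tree_restr pi t1)
      end
  end.

Lemma tree_restr_eval pi t x :
  dt_eval (tree_restr pi t) x = dt_eval t (restr_apply pi x).
Proof.
elim: t => [b|i t0 IH0 t1 IH1] //=.
by case E: (pi i) => [[]|] /=; rewrite ffunE E ?IH0 ?IH1.
Qed.

Lemma dt_cost_tree_restr_le (c : 'I_n -> R) pi t x : (forall i, 0 <= c i) ->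
  dt_cost c (tree_restr pi t) x <= dt_cost c t (restr_apply pi x).
Proof.
move=> hc; elim: t => [b|i t0 IH0 t1 IH1] //=.
case E: (pi i) => [[]|] /=; rewrite ffunE E.
- by apply: le_trans IH1 _; rewrite lerDr.
- by apply: le_trans IH0 _; rewrite lerDr.
- by case: (x i); rewrite lerD2l.
Qed.

Definition set_coord (x : cube) i b : cube := [ffun j => if j == i then b else x j].

Lemma set_coord_id (x : cube) i : set_coord x i (x i) = x.
Proof. by apply/ffunP => j; rewrite ffunE; case: eqP => [->|]. Qed.

Fixpoint full_tree (l : seq 'I_n) (g : cube -> bool) : dtree n :=
  match l with
  | [::] => DLeaf n (g [ffun=> false])
  | i :: l' => DNode i (full_tree l' (fun x => g (set_coord x i false)))
                       (full_tree l' (fun x => g (set_coord x i true)))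
  end.

Lemma full_tree_eval (l : seq 'I_n) (g : cube -> bool) :
  (forall x y : cube, {in l, x =1 y} -> g x = g y) ->
  forall x, dt_eval (full_tree l g) x = g x.
Proof.
elim: l g => [|i l IH] g Hg x /=; first exact: Hg.
have Hb b (x1 y1 : cube) : {in l, x1 =1 y1} ->
    g (set_coord x1 i b) = g (set_coord y1 i b).
  by move=> H; apply: Hg => j; rewrite in_cons !ffunE; case: (j == i) => //= /H.
have E b : dt_eval (full_tree l (fun y => g (set_coord y i b))) x = g (set_coord x i b).
  by apply: IH => y z /(Hb b).
by rewrite !E -[in RHS](set_coord_id x i); case: (x i).
Qed.

Lemma full_tree_zero_error (g : cube -> bool) :
  dt_zero_error g (full_tree (enum 'I_n) g).
Proof.
by move=> x; apply: full_tree_eval => y z H; congr g; apply/ffunP => j; rewrite H ?mem_enum.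
Qed.

Variable c : 'I_n -> R.
Hypothesis c_ge0 : forall i, 0 <= c i.

Lemma dt_cost_ge0 (t : dtree n) x : 0 <= dt_cost c t x.
Proof. by elim: t => [b|i t0 IH0 t1 IH1] //=; case: (x i); rewrite addr_ge0. Qed.

Lemma dt_cost_le_worst (t : dtree n) x : dt_cost c t x <= dt_worst_cost c t.
Proof. exact: (le_bigmax 0 (fun x => dt_cost c t x) x). Qed.

Lemma le_opt0w (f : cube -> bool) (a : R) :
  (forall t, dt_zero_error f t -> a <= dt_worst_cost c t) -> a <= opt0w f c.
Proof.
move=> H; apply: lb_le_inf; last by move=> w [t [zt ->]]; apply: H.
by exists (dt_worst_cost c (full_tree (enum 'I_n) f)), (full_tree (enum 'I_n) f);
  split => //; apply: full_tree_zero_error.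
Qed.

Lemma opt0w_ge0 (f : cube -> bool) : 0 <= opt0w f c.
Proof.
apply: le_opt0w => t _.
by apply: le_trans (dt_cost_le_worst t [ffun=> false]); apply: dt_cost_ge0.
Qed.

End TreeRestriction.

Section IprrInvariant.
Variables (R : realType) (n : nat) (f : cube n -> bool) (c : 'I_n -> R).
Variables (eps beta : R) (sel : state R n -> option 'I_n).
Hypothesis c_ge0 : forall j, 0 <= c j.
Hypothesis beta_gt0 : 0 < beta.
Local Notation cube := (cube n).
Local Notation step := (iprr_step f c eps beta sel).

Definition revealed (s : state R n) : {set 'I_n} := [set j | s.2 j != None].

Lemma revealed_step x s : revealed s \subset revealed (step x s).
Proof.
rewrite /iprr_step; case: (eps < _) => //; case: (sel s) => [i|] //.
rewrite /invest /=; case: ifP => _ //.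
by apply/fintype.subsetP => j; rewrite !inE /=; case: (j == i).
Qed.

Lemma iprr_step_agree x x' s :
  agree (revealed (step x s)) x x' -> step x' s = step x s.
Proof.
rewrite /iprr_step; case: (eps < _) => //; case: (sel s) => [i|] // H.
rewrite /invest /=; case hci: (c i <= _) => //.
by rewrite H // /revealed inE /invest /= hci eqxx.
Qed.

(* A free coordinate has either never been invested in or not yet been paid for. *)
Definition iprr_inv (x : cube) (s : state R n) : Prop :=
  [/\ forall j b, s.2 j = Some b -> x j = b,
      forall j, 0 <= s.1 j,
      forall j, s.2 j = None -> s.1 j < c j \/ s.1 j = 0
    & forall j, exists m : nat, s.1 j = m%:R * beta].

Lemma iprr_inv_init x : iprr_inv x (init_state R n).
Proof. by split => //= j; [right | exists 0%N; rewrite mul0r]. Qed.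

Lemma iprr_inv_step x s : iprr_inv x s -> iprr_inv x (step x s).
Proof.
case=> I1 I2 I3 I4; rewrite /iprr_step; case: (eps < _) => //.
case: (sel s) => [i|] //; rewrite /invest /=.
have I2' j : 0 <= (if j == i then s.1 j + beta else s.1 j).
  by case: (j == i); rewrite ?addr_ge0 // ltW.
have I4' j : exists m : nat, (if j == i then s.1 j + beta else s.1 j) = m%:R * beta.
  case: (I4 j) => m hm; case: (j == i); last by exists m.
  by exists m.+1; rewrite hm -addn1 natrD mulrDl mul1r.
case hci: (c i <= _); split => //= j.
- by case: (eqVneq j i) => [-> b [->]|_]; last exact: I1.
- by case: (eqVneq j i) => [->|_]; last exact: I3.
- case: (eqVneq j i) => [->|_]; last exact: I3.
  by move=> _; left; move: hci; rewrite eqxx ltNge => ->.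
Qed.

Lemma iprr_inv_run t x : iprr_inv x (iprr_run f c eps beta sel x t).
Proof.
elim: t => [|t IH]; first exact: iprr_inv_init.
by rewrite /iprr_run iterS; apply: iprr_inv_step.
Qed.

Lemma iprr_inv_theta_ge0 x s : iprr_inv x s -> forall j, 0 <= s.1 j.
Proof. by case. Qed.

Lemma iprr_inv_theta_le_cost x s :
  iprr_inv x s -> forall j, s.2 j = None -> s.1 j <= c j.
Proof. by case=> _ _ I3 _ j /I3 [/ltW|->]; last exact: c_ge0. Qed.

Lemma restr_apply_iprr_inv x s y :
  iprr_inv x s -> restr_apply s.2 y = mix (revealed s) x y.
Proof.
case=> I1 _ _ _; apply/ffunP => j; rewrite ffunE mixE inE.
by case E: (s.2 j) => [b|] //=; rewrite (I1 _ _ E).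
Qed.

End IprrInvariant.

Section Selection.
Variables (R : realType) (n : nat) (f : cube n -> bool) (c : 'I_n -> R) (eps : R).
Hypothesis c_ge0 : forall i, 0 <= c i.
Hypothesis eps_gt0 : 0 < eps.
Variables (s : state R n) (i : 'I_n).
Hypothesis theta_ge0 : forall j, 0 <= s.1 j.
Hypothesis theta_le_cost : forall j, s.2 j = None -> s.1 j <= c j.
Hypothesis i_max : forall j, (iprr_ratio f s j <= iprr_ratio f s i)%E.
Local Notation g := (frestr f s.2).

Lemma Inf_theta_le_cross j : Inf g j * s.1 i <= Inf g i * s.1 j :> R.
Proof.
move: (i_max j); rewrite /iprr_ratio /=.
have Ij0 : 0 <= Inf g j :> R by apply: Inf_ge0.
have Ii0 : 0 <= Inf g i :> R by apply: Inf_ge0.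
have [->|hi] := eqVneq (s.1 i) 0; first by rewrite mulr0 mulr_ge0.
have hip : 0 < s.1 i by rewrite lt_neqAle eq_sym hi theta_ge0.
have [hj|hj] := eqVneq (s.1 j) 0.
  by case: (eqVneq (Inf g j) 0) => [->|_]; rewrite ?mul0r ?hj ?mulr0 // leye_eq.
have hjp : 0 < s.1 j by rewrite lt_neqAle eq_sym hj theta_ge0.
by rewrite lee_fin ler_pdivrMr // mulrAC ler_pdivlMr.
Qed.

Lemma Inf_theta_le_cost j : Inf g j * s.1 i <= Inf g i * c j :> R.
Proof.
case E: (s.2 j) => [b|].
  by rewrite (Inf_frestr_assigned _ _ E) mul0r mulr_ge0 ?Inf_ge0.
by apply: le_trans (Inf_theta_le_cross j) _; rewrite ler_wpM2l ?Inf_ge0 ?theta_le_cost.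
Qed.

Lemma Inf_eq0_max : Inf g i = 0 :> R -> forall j, Inf g j = 0 :> R.
Proof.
move=> Ii0 j; move: (i_max j).
have -> : iprr_ratio f s i = 0%E.
  by rewrite /iprr_ratio /= Ii0 eqxx; case: (_ == 0) => //; rewrite mul0r.
rewrite /iprr_ratio /=.
have Ij0 : 0 <= Inf g j :> R by apply: Inf_ge0.
have [hj|hj] := eqVneq (s.1 j) 0.
  by case: (eqVneq (Inf g j) 0) => // _; rewrite leye_eq.
have hjp : 0 < s.1 j by rewrite lt_neqAle eq_sym hj theta_ge0.
by rewrite lee_fin ler_pdivrMr // mul0r => H; apply/eqP; rewrite eq_le H Ij0.
Qed.

(* Each query j of the restricted tree contributes Inf_j[g] <= c_j Inf_i[g] / theta_i. *)
Lemma bias_theta_le_worst_Inf T : dt_zero_error f T ->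
  bias g * s.1 i <= dt_worst_cost c T * Inf g i.
Proof.
move=> zT; set T' := tree_restr s.2 T.
have T'g x : dt_eval T' x = g x by rewrite tree_restr_eval zT.
apply: le_trans (ler_wpM2r (theta_ge0 i) (bias_le_avg_query_Inf R T'g)) _.
rewrite avgMr mulrC; apply: avg_ub => x; rewrite mulr_suml.
apply: (@le_trans _ _ (Inf g i * dt_cost c T' x)).
  rewrite -(walk_cost c finset.set0 x (leqnn _)) mulr_sumr; apply: ler_sum => t _.
  rewrite /query_cost /next_query /=.
  by case: (_ : dtree n * _).1 => [b|j t0 t1] /=; rewrite ?mul0r ?mulr0 ?Inf_theta_le_cost.
rewrite ler_wpM2l ?Inf_ge0 //; apply: le_trans (dt_cost_tree_restr_le _ _ _ c_ge0) _.
exact: dt_cost_le_worst.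
Qed.

Hypothesis eps_lt_bias : eps < bias g.

Lemma selected_Inf_gt0 : 0 < Inf g i :> R.
Proof.
rewrite lt_neqAle Inf_ge0 andbT; apply/negP => /eqP/esym/Inf_eq0_max Inf0.
have bias_le0 : bias g <= 0 :> R.
  apply: le_trans (bias_le_avg_query_Inf R (full_tree_zero_error g)) (avg_ub _) => x.
  by rewrite big1 // => t _; case: (next_query _) => //= j; apply: Inf0.
by have := lt_trans eps_gt0 (lt_le_trans eps_lt_bias bias_le0); rewrite ltxx.
Qed.

Lemma selected_theta_le_opt : eps * s.1 i <= opt0w f c * Inf g i.
Proof.
rewrite -ler_pdivrMr ?selected_Inf_gt0 //.
apply: le_opt0w => // T zT; rewrite ler_pdivrMr ?selected_Inf_gt0 //.
apply: le_trans (bias_theta_le_worst_Inf zT).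
by rewrite ler_wpM2r ?theta_ge0 // ltW.
Qed.

End Selection.

Section IprrRun.
Variables (R : realType) (n : nat) (f : cube n -> bool) (c : 'I_n -> R).
Variables (eps beta : R) (sel : state R n -> option 'I_n).
Hypothesis c_ge0 : forall i, 0 <= c i.
Hypothesis eps_gt0 : 0 < eps.
Hypothesis beta_gt0 : 0 < beta.
Hypothesis sel_max : iprr_selector f eps sel.
Local Notation step := (iprr_step f c eps beta sel).
Local Notation run t x := (iprr_run f c eps beta sel x t).
Let run_inv t x : iprr_inv c beta x (run t x) := iprr_inv_run f c eps sel beta_gt0 t x.

Lemma iprr_runS t x : run t.+1 x = step x (run t x).
Proof. by rewrite /iprr_run iterS. Qed.

Lemma iprr_step_halted x s : ~~ (eps < bias (frestr f s.2)) -> step x s = s.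
Proof. by rewrite /iprr_step => /negbTE ->. Qed.

Lemma iprr_step_active x s : iprr_inv c beta x s -> eps < bias (frestr f s.2) ->
  exists i, [/\ step x s = invest c beta x s i, s.2 i = None &
    eps * s.1 i <= opt0w f c * Inf (frestr f s.2) i].
Proof.
move=> hI hb; have [i hi imax] := sel_max hb.
have theta_ge0 := iprr_inv_theta_ge0 hI.
have theta_le_cost := iprr_inv_theta_le_cost c_ge0 hI.
exists i; split; first by rewrite /iprr_step hb hi.
  case E: (s.2 i) => [b|] //; move: (selected_Inf_gt0 eps_gt0 theta_ge0 imax hb).
  by rewrite (Inf_frestr_assigned _ _ E) ltxx.
exact: selected_theta_le_opt.
Qed.

Lemma iprr_theta_le t x j : (run t x).1 j <= c j + beta.
Proof.
elim: t j => [|t IH] j; first by rewrite /= addr_ge0 // ltW.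
have hI := run_inv t x.
rewrite iprr_runS; case hb: (eps < bias (frestr f (run t x).2)).
  have [i [-> free _]] := iprr_step_active hI hb.
  rewrite /invest /=; case: (eqVneq j i) => [->|_] //.
  by rewrite lerD2r (iprr_inv_theta_le_cost c_ge0 hI).
by rewrite iprr_step_halted ?hb.
Qed.

Lemma l1cost_sum (s : state R n) : (forall j, 0 <= s.1 j) -> l1cost s = \sum_j s.1 j.
Proof. by move=> H; apply: eq_bigr => j _; rewrite ger0_norm. Qed.

Lemma iprr_halted_or_cost x t :
  iprr_halted f eps (run t x) \/ l1cost (run t x) = t%:R * beta.
Proof.
elim: t => [|t IH]; first by right; rewrite mul0r /l1cost big1 // => j _; rewrite normr0.
have hI := run_inv t x.
have hI' := run_inv t.+1 x.
rewrite /iprr_halted iprr_runS in IH hI' *.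
case hb: (eps < bias (frestr f (run t x).2)); last first.
  by left; rewrite iprr_step_halted ?hb // leNgt hb.
case: IH => [|IH]; first by rewrite leNgt hb.
have [i [E _ _]] := iprr_step_active hI hb; right; rewrite E in hI' *.
rewrite (l1cost_sum (iprr_inv_theta_ge0 hI')) /invest /= (bigD1 i) //= eqxx.
rewrite (l1cost_sum (iprr_inv_theta_ge0 hI)) (bigD1 i) //= in IH.
under eq_bigr => j /negbTE -> do [].
by rewrite addrAC IH -addn1 natrD mulrDl mul1r.
Qed.

(* Every step invests beta, and no coordinate absorbs more than c_j + beta. *)
Lemma iprr_halts : exists K : nat, forall x, iprr_halted f eps (run K x).
Proof.
pose K := (Num.truncn ((\sum_j (c j + beta)) / beta)).+1.
exists K => x; case: (iprr_halted_or_cost x K) => // cost_eq.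
have : l1cost (run K x) <= \sum_j (c j + beta).
  rewrite (l1cost_sum (iprr_inv_theta_ge0 (run_inv K x))).
  by apply: ler_sum => j _; apply: iprr_theta_le.
rewrite cost_eq -ler_pdivlMr // => H.
by have := lt_le_trans (truncnS_gt _) H; rewrite ltxx.
Qed.

End IprrRun.

Section Error.
Variables (R : realType) (n : nat).
Local Notation cube := (cube n).
Local Notation ncube := (ncube R n).

Lemma sum_majority_neq (g : cube -> bool) :
  \sum_y ((((2^-1 : R) <= expect_bool g) != g y)%:R : R) = ncube * bias g.
Proof.
have N0 := ncube_gt0 R n.
set S1 := \sum_y ((g y != false)%:R : R).
set S0 := \sum_y ((g y != true)%:R : R).
have HS : S1 + S0 = ncube.
  rewrite /S1 /S0 -big_split /= (eq_bigr (fun _ => 1)) ?sumr_const //.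
  by move=> y _; case: (g y); rewrite /= ?addr0 ?add0r.
have He : expect_bool g = S1 / ncube.
  by rewrite /expect_bool /avg /S1; congr (_ / _); apply: eq_bigr => y _; case: (g y).
have HS0 : S0 / ncube = 1 - S1 / ncube.
  have -> : S0 = ncube - S1 by rewrite -HS addrC addKr.
  by rewrite mulrBl divff ?gt_eqF.
have -> : bias g = Num.min (S1 / ncube) (S0 / ncube) by [].
rewrite He HS0; case: (lerP (2^-1) (S1 / ncube)) => H.
  rewrite min_r; last by lra.
  by rewrite -HS0 mulrC divfK ?gt_eqF // /S0; apply: eq_bigr => y _; rewrite eq_sym.
rewrite min_l; last by lra.
by rewrite mulrC divfK ?gt_eqF // /S1; apply: eq_bigr => y _; rewrite eq_sym.
Qed.

Variables (f : cube -> bool) (c : 'I_n -> R) (eps beta : R).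
Variable sel : state R n -> option 'I_n.
Hypothesis beta_gt0 : 0 < beta.
Local Notation run t x := (iprr_run f c eps beta sel x t).

Lemma iprr_error_le K : (forall x, iprr_halted f eps (run K x)) ->
  prob (fun x => iprr_output f (run K x) != f x) <= eps.
Proof.
move=> halted; have N0 := ncube_gt0 R n.
have step_dom := @revealed_step _ _ f c eps beta sel.
have step_agree := @iprr_step_agree _ _ f c eps beta sel.
pose prun t x := process_run (iprr_step f c eps beta sel) (init_state R n) t x.
have stD : stopping (fun x => revealed (prun K x)) :=
  @process_dom_stopping _ _ _ _ _ step_dom step_agree K.
pose K' x z := ((iprr_output f (prun K x) != f z)%:R : R).
have HK x x' z : agree (revealed (prun K x)) x x' -> K' x' z = K' x z.
  by move=> H; rewrite /K' /prun (process_run_agree step_dom step_agree H).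
rewrite /prob /avg -/ncube ler_pdivrMr // -(ler_pM2l N0).
rewrite -[\sum_x _]/(\sum_x K' x x) -(sum_mix_stopping stD HK).
rewrite (mulrC eps) -[X in _ <= X]sumr_cube_cst; apply: ler_sum => x _.
under eq_bigr => y _ do
  rewrite /K' -(restr_apply_iprr_inv y (iprr_inv_run f c eps sel beta_gt0 K x)).
by rewrite /iprr_output sum_majority_neq ler_pM2l //; apply: halted.
Qed.

End Error.

Section MinIntegral.
Variable R : realType.

Lemma subr_le_mul_lnB (u v : R) : 0 < u -> 0 < v -> v - u <= (ln v - ln u) * v.
Proof.
move=> hu hv.
have h1 : -1 < u / v - 1 by have := divr_gt0 hu hv; lra.
have := le_ln1Dx h1; rewrite addrC subrK ln_div ?posrE // => H.
have E : (u / v - 1) * v = u - v by rewrite mulrBl divfK ?gt_eqF // mul1r.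
have : (ln u - ln v) * v <= (u / v - 1) * v by rewrite ler_pM2r.
rewrite E; lra.
Qed.

Variable m : R.
Hypothesis m_gt0 : 0 < m.

(* The integral of min(1, m / lam) over lam in [0, s]. *)
Definition min_integral (s : R) : R := if s <= m then s else m + m * (ln s - ln m).

(* On [a, b] the integrand is at least min(1, m / b) >= P. *)
Lemma min_integral_increment (a b P : R) :
  0 <= a -> a <= b -> 0 < b -> 0 <= P -> P <= 1 -> P * b <= m ->
  (b - a) * P <= min_integral b - min_integral a.
Proof.
move=> ha hab hb hP0 hP1 hPb; rewrite /min_integral.
case: (lerP b m) => hbm; first by rewrite (le_trans hab hbm); nra.
case: (lerP a m) => ham.
  have LN := subr_le_mul_lnB m_gt0 hb.
  have e1 : 0 <= (b - m) * (m - P * b) by apply: mulr_ge0; lra.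
  have e2 : 0 <= m * ((ln b - ln m) * b - (b - m)) by apply: mulr_ge0; lra.
  have H : b * ((b - m) * P) <= b * (m * (ln b - ln m)) by nra.
  rewrite ler_pM2l // in H; nra.
have LN := subr_le_mul_lnB (lt_trans m_gt0 ham) hb.
have e1 : 0 <= (b - a) * (m - P * b) by apply: mulr_ge0; lra.
have e2 : 0 <= m * ((ln b - ln a) * b - (b - a)).
  by apply: mulr_ge0; [exact: ltW | rewrite subr_ge0].
have H : b * ((b - a) * P) <= b * (m * (ln b - ln a)) by nra.
rewrite ler_pM2l // in H; lra.
Qed.

Lemma min_integral_le (a b : R) :
  0 <= a -> a <= b -> 0 < b -> min_integral a <= min_integral b.
Proof.
move=> ha hab hb; rewrite -subr_ge0.
have := min_integral_increment ha hab hb (lexx 0) ler01.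
by rewrite !mul0r mulr0; apply; apply: ltW.
Qed.

Lemma min_integral0 : min_integral 0 = 0.
Proof. by rewrite /min_integral ltW. Qed.

Lemma min_integral1 : m <= 1 -> min_integral 1 = m * (1 + ln m^-1).
Proof.
move=> hm1; rewrite /min_integral; case: (lerP 1 m) => h.
  have -> : m = 1 by apply/eqP; rewrite eq_le hm1 h.
  by rewrite invr1 ln1 addr0 mulr1.
rewrite ln1 lnV ?posrE //; lra.
Qed.

End MinIntegral.

Section RiemannSum.
Variables (R : realType) (m delta : R) (P : nat -> R).
Hypothesis delta_gt0 : 0 < delta.
Hypothesis m_ge0 : 0 <= m.
Hypothesis m_le1 : m <= 1.
Hypothesis P_ge0 : forall k, 0 <= P k.
Hypothesis P_le1 : forall k, P k <= 1.
Hypothesis P_le_m : forall k, k.+1%:R * delta * P k.+1 <= m.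
Hypothesis P_eq0 : forall k, 1 < k%:R * delta -> P k = 0.

Lemma riemann_sum_eq0 L : m = 0 -> \sum_(k < L) delta * P k.+1 = 0.
Proof.
move=> m0; apply: big1 => k _.
have hk : 0 < k.+1%:R * delta by rewrite mulr_gt0 // ltr0n.
suff -> : P k.+1 = 0 by rewrite mulr0.
by apply/eqP; rewrite eq_le P_ge0 andbT -(ler_pM2l hk) mulr0 -m0.
Qed.

Local Notation Psi s := (min_integral m (Num.min s 1)).

Lemma riemann_term_le (m_gt0 : 0 < m) k :
  delta * P k.+1 <= Psi (k.+1%:R * delta) - Psi (k%:R * delta).
Proof.
have hk0 : 0 <= k%:R * delta by rewrite mulr_ge0 // ?ler0n ltW.
have hk1 : k%:R * delta <= k.+1%:R * delta by rewrite ler_pM2r // ler_nat.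
have hmin0 : 0 <= Num.min (k%:R * delta) 1 by rewrite le_min hk0 ler01.
case: (lerP (k.+1%:R * delta) 1) => hb; last first.
  rewrite P_eq0 // mulr0 subr_ge0.
  by apply: min_integral_le => //; rewrite ?ge_min ?lexx ?orbT.
rewrite (min_l (le_trans hk1 hb)).
have E : k.+1%:R * delta - k%:R * delta = delta by rewrite -mulrBl -natrB // subSnn mul1r.
rewrite -{1}E.
by apply: min_integral_increment; rewrite // ?mulr_gt0 ?ltr0n // mulrC.
Qed.

Lemma riemann_sum_le_inf_term L : \sum_(k < L) delta * P k.+1 <= inf_term m.
Proof.
have [m0|m_neq0] := eqVneq m 0; first by rewrite riemann_sum_eq0 // m0 /inf_term eqxx.
have m_gt0 : 0 < m by rewrite lt_neqAle eq_sym m_neq0.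
apply: (@le_trans _ _ (\sum_(k < L) (Psi (k.+1%:R * delta) - Psi (k%:R * delta)))).
  by apply: ler_sum => k _; apply: riemann_term_le.
rewrite -(big_mkord xpredT (fun k => Psi (k.+1%:R * delta) - Psi (k%:R * delta))).
rewrite (telescope_sumr (fun k => Psi (k%:R * delta)) (leq0n L)) mul0r.
rewrite (min_l ler01) min_integral0 // subr0 /inf_term gt_eqF // -min_integral1 //.
by apply: min_integral_le; rewrite ?le_min ?ler01 ?mulr_ge0 ?ler0n ?ge_min ?lexx ?orbT // ltW.
Qed.

End RiemannSum.

Lemma natr_le_add1_count (R : numDomainType) (L N : nat) : (N <= L.+1)%N ->
  (N%:R : R) <= 1 + \sum_(k < L) (((k.+1 < N)%N)%:R : R).
Proof.
elim: L N => [|L IH] N hN; first by rewrite big_ord0 addr0 -[1]/(1%:R) ler_nat.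
rewrite big_ord_recr /= addrA.
case: (leqP N L.+1) => h; first by apply: le_trans (IH _ h) _; rewrite lerDl.
have -> : N = L.+2 by apply/eqP; rewrite eqn_leq hN h.
have -> : (L.+2%:R : R) = L.+1%:R + (true%:R : R) by rewrite -natrD addn1.
rewrite lerD2r; apply: le_trans (IH _ (leqnn _)) _; rewrite lerD2l.
apply: ler_sum => k _; have h1 : (k.+1 < L.+1)%N := ltn_ord k.
by have h2 : (k.+1 < L.+2)%N := ltnW h1; rewrite h1 h2.
Qed.

Section CoordinateCost.
Variables (R : realType) (n : nat) (f : cube n -> bool) (c : 'I_n -> R).
Variables (eps beta : R) (sel : state R n -> option 'I_n).
Hypothesis c_ge0 : forall i, 0 <= c i.
Hypothesis eps_gt0 : 0 < eps.
Hypothesis beta_gt0 : 0 < beta.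
Hypothesis sel_max : iprr_selector f eps sel.
Variable i : 'I_n.
Local Notation cube := (cube n).
Local Notation step := (iprr_step f c eps beta sel).
Local Notation run t x := (iprr_run f c eps beta sel x t).
Local Notation opt := (opt0w f c).
Let run_inv t x : iprr_inv c beta x (run t x) := iprr_inv_run f c eps sel beta_gt0 t x.

Definition infl (s : state R n) : R := Inf (frestr f s.2) i.

Lemma iprr_theta_stepS t x : (run t.+1 x).1 i = (run t x).1 i \/
  ((run t.+1 x).1 i = (run t x).1 i + beta /\ eps * (run t x).1 i <= opt * infl (run t x)).
Proof.
rewrite iprr_runS; case hb: (eps < bias (frestr f (run t x).2)).
  have [j [-> _ H]] := iprr_step_active c_ge0 eps_gt0 sel_max (run_inv t x) hb.
  rewrite /invest /=; case: (eqVneq i j) => [E|_]; last by left.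
  by rewrite -E in H *; right.
by left; rewrite iprr_step_halted ?hb.
Qed.

Lemma theta_i_le_opt0 : opt = 0 -> forall t x, (run t x).1 i <= beta.
Proof.
move=> opt0; elim => [|t IH] x; first by rewrite /= ltW.
case: (iprr_theta_stepS t x) => [->|[->]] //; rewrite opt0 mul0r => H.
have : (run t x).1 i <= 0 by rewrite -(ler_pM2l eps_gt0) mulr0.
by have := IH x; lra.
Qed.

Lemma theta_i_le t x : (run t x).1 i <= beta + opt / eps.
Proof.
have opt_eps_ge0 : 0 <= opt / eps by rewrite divr_ge0 ?opt0w_ge0 // ltW.
elim: t => [|t IH]; first by rewrite /= addr_ge0 // ltW.
case: (iprr_theta_stepS t x) => [->|[-> H]] //.
have : eps * (run t x).1 i <= opt.
  by apply: le_trans H _; rewrite ler_piMr ?opt0w_ge0 ?Inf_le1.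
by rewrite mulrC -ler_pdivlMr // => H2; lra.
Qed.

Definition stopped_step (lam : R) x (s : state R n) := if lam <= infl s then s else step x s.

Definition stopped_run (lam : R) t x := process_run (stopped_step lam) (init_state R n) t x.

Lemma revealed_stopped_step lam x s : revealed s \subset revealed (stopped_step lam x s).
Proof. by rewrite /stopped_step; case: ifP => _; [exact: subxx | exact: revealed_step]. Qed.

Lemma stopped_step_agree lam x x' s :
  agree (revealed (stopped_step lam x s)) x x' -> stopped_step lam x' s = stopped_step lam x s.
Proof. by rewrite /stopped_step; case: ifP => // _; apply: iprr_step_agree. Qed.

Lemma stopped_run_inv (lam : R) t x : iprr_inv c beta x (stopped_run lam t x).
Proof.
elim: t => [|t IH]; first exact: iprr_inv_init.
rewrite /stopped_run /process_run iterS -!/(process_run _ _ t x) /stopped_step.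
by case: ifP => _ //; apply: iprr_inv_step.
Qed.

Local Notation Inf_at z := (((f z != f (flip z i))%:R : R)).

Lemma infl_le_avg_resample (s : state R n) x : iprr_inv c beta x s ->
  infl s <= avg (fun y => Inf_at (mix (revealed s) x y)).
Proof.
move=> hI; apply: avg_ler => y; rewrite /frestr.
case E: (s.2 i) => [b|]; first by rewrite (restr_apply_flip_assigned y E) eqxx.
by rewrite (restr_apply_flip_free y E) (restr_apply_iprr_inv y hI).
Qed.

(* Inf_i[f_pi] is a supermartingale: resampling the free coordinates of a
   stopped run returns the uniform distribution. *)
Lemma avg_stopped_infl_le (lam : R) (K : nat) :
  avg (fun x => infl (stopped_run lam K x)) <= Inf f i.
Proof.
apply: le_trans (avg_ler (fun x => infl_le_avg_resample (stopped_run_inv lam K x))) _.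
have stD : stopping (fun x => revealed (stopped_run lam K x)) :=
  @process_dom_stopping _ _ _ _ _ (@revealed_stopped_step lam) (@stopped_step_agree lam) K.
have := sum_mix_stopping stD (K := fun _ z => Inf_at z) (fun _ _ _ _ => erefl).
rewrite /avg -mulr_suml /= => ->.
by rewrite -mulrA (mulrC (ncube R n)) mulrA mulfK ?gt_eqF ?ncube_gt0.
Qed.

Lemma markov_stopped_infl (lam : R) (K : nat) : 0 <= lam ->
  lam * avg (fun x => ((lam <= infl (stopped_run lam K x))%R%:R : R)) <= Inf f i.
Proof.
move=> lam_ge0; apply: le_trans (@avg_stopped_infl_le lam K).
rewrite avgMl; apply: avg_ler => x.
by case: (lerP lam _) => h; rewrite /= ?mulr1 ?mulr0 ?Inf_ge0.
Qed.

(* While infl stays below lam = eps k beta / opt, the selection bound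
   eps theta_i <= opt infl caps theta_i at k beta. *)
Lemma stopped_or_theta_le (k : nat) (lam : R) : 0 < opt -> opt * lam = eps * (k%:R * beta) ->
  forall t x, lam <= infl (stopped_run lam t x) \/
    (stopped_run lam t x = run t x /\ (run t x).1 i <= k%:R * beta).
Proof.
move=> opt_gt0 opt_lam; elim => [|t IH] x.
  by right; split => //=; rewrite mulr_ge0 ?ler0n // ltW.
have E1 : stopped_run lam t.+1 x = stopped_step lam x (stopped_run lam t x).
  by rewrite /stopped_run /process_run iterS.
case: (IH x) => [H|[E Hth]]; first by left; rewrite E1 /stopped_step H.
case hl: (lam <= infl (stopped_run lam t x)); first by left; rewrite E1 /stopped_step hl.
right; split; first by rewrite E1 /stopped_step hl E iprr_runS.
case: (iprr_theta_stepS t x) => [->|[-> H]] //.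
have theta_lt : eps * (run t x).1 i < eps * (k%:R * beta).
  by apply: le_lt_trans H _; rewrite -opt_lam ltr_pM2l // -E ltNge hl.
rewrite ltr_pM2l // in theta_lt.
have [_ _ _ /(_ i) [m hm]] := run_inv t x.
rewrite hm ltr_pM2r // ltr_nat in theta_lt.
by rewrite hm -{2}(mul1r beta) -mulrDl ler_pM2r // natr1 ler_nat.
Qed.

(* theta_i = N beta with N <= L + 1, and each level lam (k + 1) with k + 1 < N
   has been crossed. *)
Lemma theta_i_le_crossings (lam : nat -> R) K x (L : nat) :
  0 < opt -> (forall k : nat, opt * lam k = eps * (k%:R * beta)) ->
  opt / eps / beta < L%:R ->
  (run K x).1 i <= beta + beta * \sum_(k < L)
    ((lam k.+1 <= infl (stopped_run (lam k.+1) K x))%R%:R : R).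
Proof.
move=> opt_gt0 opt_lam HL.
have [_ _ _ /(_ i) [N hN]] := run_inv K x.
have hNL : (N <= L.+1)%N.
  have H1 := theta_i_le K x.
  rewrite ltr_pdivrMr // in HL.
  have H2 : N%:R * beta < L.+1%:R * beta by rewrite -hN -natr1 mulrDl mul1r; lra.
  by rewrite ltr_pM2r // ltr_nat in H2; apply: ltnW.
rewrite hN; apply: le_trans (ler_wpM2r (ltW beta_gt0) (natr_le_add1_count R hNL)) _.
rewrite mulrDl mul1r lerD2l mulrC ler_pM2l //; apply: ler_sum => k _.
case hk: (k.+1 < N)%N; last exact: ler0n.
case: (stopped_or_theta_le opt_gt0 (opt_lam k.+1) K x) => [->|[_ Hth]] //.
by rewrite hN ler_pM2r // ler_nat leqNgt hk in Hth.
Qed.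

Lemma avg_theta_i_le K :
  avg (fun x => (run K x).1 i) <= beta + opt / eps * inf_term (Inf f i).
Proof.
have [opt0|opt_neq0] := eqVneq opt 0.
  by rewrite opt0 !mul0r addr0; apply: avg_ub; apply: theta_i_le_opt0.
have opt_gt0 : 0 < opt by rewrite lt_neqAle eq_sym opt_neq0 opt0w_ge0.
pose delta := eps * beta / opt.
have delta_gt0 : 0 < delta by rewrite /delta divr_gt0 // mulr_gt0.
pose lam (k : nat) := k%:R * delta.
have opt_lam k : opt * lam k = eps * (k%:R * beta).
  by rewrite /lam /delta; field; rewrite gt_eqF.
pose L := (Num.truncn (opt / eps / beta)).+1.
pose P k := avg (fun x => ((lam k <= infl (stopped_run (lam k) K x))%R%:R : R)).
have crossings x := @theta_i_le_crossings lam K x L opt_gt0 opt_lam (truncnS_gt _).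
apply: le_trans (avg_ler crossings) _.
rewrite avgD avg_cst lerD2l -avgMl avg_sum -/L -/(P _).
have -> : beta * \sum_(k < L) P k.+1 = opt / eps * \sum_(k < L) delta * P k.+1.
  rewrite !mulr_sumr; apply: eq_bigr => k _; rewrite /delta mulrA.
  by congr (_ * _); field; rewrite !gt_eqF.
rewrite ler_wpM2l ?divr_ge0 ?opt0w_ge0 ?(ltW eps_gt0) //.
apply: riemann_sum_le_inf_term => //.
- exact: Inf_ge0.
- exact: Inf_le1.
- by move=> k; apply: avg_ge0 => x; apply: ler0n.
- by move=> k; apply: avg_ub => x; rewrite lern1 leq_b1.
- move=> k; rewrite -/(lam k.+1) /P; apply: markov_stopped_infl.
  by rewrite mulr_ge0 ?ler0n ?ltW.
- move=> k hk; rewrite /P -(avg_cst n (0 : R)); congr avg; apply: funext => x.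
  by rewrite leNgt (le_lt_trans (Inf_le1 _ _ _) hk).
Qed.

End CoordinateCost.

Theorem mainTheorem2 (R : realType) (n : nat) (f : cube n -> bool)
    (c : 'I_n -> R) (eps beta : R) (sel : state R n -> option 'I_n) :
  (forall i, 0 <= c i) ->
  0 < eps -> eps <= 2^-1 -> 0 < beta ->
  iprr_selector f eps sel ->
  exists K : nat,
    (forall x : cube n, iprr_halted f eps (iprr_run f c eps beta sel x K)) /\
    prob (fun x => iprr_output f (iprr_run f c eps beta sel x K) != f x) <= eps /\
    avg (fun x => l1cost (iprr_run f c eps beta sel x K))
      <= beta * n%:R + opt0w f c / eps * \sum_(i < n) inf_term (Inf f i).
Proof.
move=> c_ge0 eps_gt0 _ beta_gt0 sel_max.
have [K halted] := iprr_halts c_ge0 eps_gt0 beta_gt0 sel_max.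
exists K; split => //; split; first exact: iprr_error_le.
have -> : avg (fun x => l1cost (iprr_run f c eps beta sel x K)) =
          avg (fun x => \sum_i (iprr_run f c eps beta sel x K).1 i).
  congr avg; apply: funext => x; apply: l1cost_sum.
  exact: iprr_inv_theta_ge0 (iprr_inv_run f c eps sel beta_gt0 K x).
rewrite avg_sum.
apply: le_trans (ler_sum _ (fun i _ => avg_theta_i_le c_ge0 eps_gt0 beta_gt0 sel_max i K)) _.
by rewrite big_split /= -mulr_sumr sumr_const card_ord mulr_natr.
Qed.
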